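(* Protocol P4 (described in the context) perfectly constructs (i.e. $0$-constructs) the Remote State Preparation with Selective NOT resource RSP-SN from one use of the Remote Unitary resource RU, in the Abstract Cryptography framework.
   Context: Notation: $C(\rho)$ denotes $C\rho C^\dagger$; $Z$ is the Pauli phase flip. Abstract Cryptography (AC) framework (two parties: a Sender, always assumed honest, and a Receiver). A resource is a system with an interface for each party which receives (classical or quantum) inputs at its interfaces, applies a specified CPTP map, and returns outputs at interfaces; a filtered interface is accessible only to a dishonest party (and is set to a default value when the party is honest). A protocol $\pi=(\pi_S,\pi_R)$ consists of converters (sequences of CPTP maps describing honest parties' actions) plugged into the interfaces of the available resource $\mathcal R$, giving a new resource $\pi\mathcal R$. A distinguisher is an unbounded system interacting adaptively with all outer interfaces of a resource and outputting a bit. Two resources are $\epsilon$-indistinguishable, $\mathcal R_1\approx_\epsilon\mathcal R_2$, if for every distinguisher $\mathcal D$, $|\Pr[\mathcal D\mathcal R_1=1]-\Pr[\mathcal D\mathcal R_2=1]|\le\epsilon$. A protocol $\pi$ $\epsilon$-constructs $\mathcal S$ from $\mathcal R$ if (1) correctness: $\pi\mathcal R\approx_\epsilon\mathcal S$ (filtered interfaces at their honest defaults), and (2) security against a malicious Receiver: there exists a converter (simulator) $\sigma$ plugged into the Receiver's interface (including filtered interfaces) of $\mathcal S$ with $\pi_S\mathcal R\approx_\epsilon \mathcal S\sigma$. ''Perfectly'' means $\epsilon=0$. Resource RSP-SN: the Sender inputs the classical description of a single-qubit unitary $U$; the Receiver inputs a bit $b\in\{0,1\}$ on a filtered interface (set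 to $0$ in the honest case); the resource sends a qubit in state $U|b\rangle$ to the Receiver. Resource RU: the Sender inputs the classical description of a single-qubit unitary $U$; the Receiver inputs a single qubit in state $\rho$; the resource outputs $U(\rho)$ to the Receiver. Protocol P4 (Sender input: single-qubit unitary $U$): the Sender samples $d\in\{0,1\}$ uniformly at random and inputs the unitary $UZ^d$ into RU; the honest Receiver inputs a qubit in state $|0\rangle$ and sets the qubit returned by RU as its output. *)

(* Complex numbers: algC (algebraic complex numbers, with
   conjugation ^* and the order 0 <= x meaning "x is real and nonnegative"). *)
From HB Require Import structures.
From mathcomp Require Import all_boot all_order all_algebra algC.
From mathcomp Require Import mxtens.
Set Implicit Arguments. Unset Strict Implicit. Unset Printing Implicit Defensive.
Import Order.TTheory GRing.Theory Num.Theory Num.Def.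
Local Open Scope ring_scope.

Definition adj {m n} (A : 'M[algC]_(m, n)) : 'M[algC]_(n, m) := (map_mx conjC A)^T.

Definition psd {n} (A : 'M[algC]_n) : Prop :=
  adj A = A /\ forall v : 'cV[algC]_n, 0 <= (adj v *m A *m v) 0 0.

Definition density {n} (rho : 'M[algC]_n) : Prop := psd rho /\ \tr rho = 1.

Definition effect {n} (E : 'M[algC]_n) : Prop := psd E /\ psd (1%:M - E).

Definition unitary {n} (U : 'M[algC]_n) : Prop := U *m adj U = 1%:M.

Definition conj {m n} (C : 'M[algC]_(m, n)) (rho : 'M[algC]_n) : 'M[algC]_m :=
  C *m rho *m adj C.

Definition PauliZ : 'M[algC]_2 := \matrix_(i, j) (if i == j then (-1) ^+ i else 0).
Definition Zpow (d : bool) : 'M[algC]_2 := if d then PauliZ else 1%:M.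

Definition ket (b : bool) : 'cV[algC]_2 := \col_i (if i == b :> nat then 1 else 0).
Definition proj (b : bool) : 'M[algC]_2 := ket b *m adj (ket b).

(* Distinguishing probability Pr[D outputs 1] when the final state held by D
   (output qubit of the resource together with D's reference system R of
   dimension m; ordering R (x) qubit) is [out] and D measures the effect E. *)
Definition prob {n} (E out : 'M[algC]_n) : algC := \tr (E *m out).

Definition eps_close (eps : algC) (p q : algC) : Prop := `|p - q| <= eps.

Definition onq {m a b} (K : 'M[algC]_(a, b)) : 'M[algC]_(m * a, m * b) :=
  (1%:M : 'M[algC]_m) *t K.

(* RSP-SN: Sender inputs U, (filtered) Receiver input b; outputs U|b> *)
Definition RSPSN (U : 'M[algC]_2) (b : bool) : 'M[algC]_2 := conj U (proj b).

(* RU: Sender inputs U, Receiver inputs a qubit rho (possibly entangled with a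
   reference system R of dimension m, ordering R (x) qubit); outputs U(rho). *)
Definition RU {m} (U : 'M[algC]_2) (rho : 'M[algC]_(m * 2)) : 'M[algC]_(m * 2) :=
  conj (onq U) rho.

(* Sender converter pi_S : samples d uniformly and inputs U Z^d into RU.
   pi_S RU, with the Receiver interface left open (dishonest Receiver): *)
Definition piS_RU {m} (U : 'M[algC]_2) (rho : 'M[algC]_(m * 2)) : 'M[algC]_(m * 2) :=
  \sum_(d : bool) 2^-1 *: RU (U *m Zpow d) rho.

(* pi_S pi_R RU (both honest): the honest Receiver inputs |0> and outputs the
   qubit returned by RU. *)
Definition piS_piR_RU (U : 'M[algC]_2) : 'M[algC]_2 :=
  \sum_(d : bool) 2^-1 *: conj (U *m Zpow d) (proj false).

(* ---------- converters (simulators) at the Receiver interface of RSP-SN ----------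
   A general simulator sigma: it receives the adversary's qubit, applies a
   quantum instrument with classical outcome b (the bit it feeds into the filtered
   interface of RSP-SN) and quantum output in a memory of dimension r
   (Kraus operators [K b] : 'M_(r,2), complete in total); it then receives the qubit
   U|b> from RSP-SN and applies a channel (Kraus operators [L] : 'M_(2, r*2),
   complete) to memory (x) received qubit, outputting one qubit. *)
Record simulator := Simulator {
  sim_r : nat;
  sim_K : bool -> seq 'M[algC]_(sim_r, 2);
  sim_L : seq 'M[algC]_(2, sim_r * 2);
  sim_K_complete :
    \sum_(b : bool) \sum_(k <- sim_K b) adj k *m k = 1%:M;
  sim_L_complete : \sum_(l <- sim_L) adj l *m l = 1%:M
}.

Definition RSPSN_sigma (s : simulator) {m} (U : 'M[algC]_2)
    (rho : 'M[algC]_(m * 2)) : 'M[algC]_(m * 2) :=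
  \sum_(b : bool)
    let mem : 'M[algC]_(m * sim_r s) := \sum_(k <- sim_K s b) conj (onq k) rho in
    let joint : 'M[algC]_(m * (sim_r s * 2)) :=
      castmx (esym (mulnA _ _ _), esym (mulnA _ _ _)) (mem *t RSPSN U b) in
    \sum_(l <- sim_L s) conj (onq l) joint.

(* ---------- construction in the AC framework (two parties, honest Sender) ----------
   Distinguishers: choose the Sender's input U, prepare an arbitrary state on
   (reference R of arbitrary dimension m) (x) (qubit input at the Receiver's
   interface), receive the output qubit, and perform an arbitrary two-outcome
   measurement {E, 1-E} on R (x) output. *)

(* Correctness: pi RU ~eps RSP-SN with the filtered input at its default b = 0. *)
Definition P4_correct (eps : algC) : Prop :=
  forall (U : 'M[algC]_2) (E : 'M[algC]_2), unitary U -> effect E ->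
    eps_close eps (prob E (piS_piR_RU U)) (prob E (RSPSN U false)).

Definition P4_secure (eps : algC) : Prop :=
  exists s : simulator,
    forall (m : nat) (U : 'M[algC]_2) (rho E : 'M[algC]_(m * 2)),
      unitary U -> density rho -> effect E ->
      eps_close eps (prob E (piS_RU U rho)) (prob E (RSPSN_sigma s U rho)).

Definition P4_constructs (eps : algC) : Prop := P4_correct eps /\ P4_secure eps.

From mathcomp Require Import all_boot all_order all_algebra algC mxtens ring.
Set Implicit Arguments. Unset Strict Implicit. Unset Printing Implicit Defensive.
Import GRing.Theory Num.Theory.
Local Open Scope ring_scope.

(* Averaging over the secret bit d replaces the Receiver's qubit rho by
   (rho + Z rho Z) / 2, and writing 1 = P0 + P1, Z = P0 - P1 with P_b = |b><b|,
   the parallelogram law turns this into P0 rho P0 + P1 rho P1: the qubit is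
   dephased in the computational basis before U is applied.  The same
   state is produced by the simulator that measures the adversary's qubit in the
   computational basis, feeds the outcome b to RSP-SN and forwards U|b>.  For the
   honest Receiver nothing is lost at all, since Z|0> = |0>. *)

Section TensorAlgebra.
Variable R : comPzRingType.

Lemma tensmxDr m n p q (A : 'M[R]_(m, n)) (B C : 'M[R]_(p, q)) :
  A *t (B + C) = A *t B + A *t C.
Proof. by apply/matrixP=> i j; rewrite !mxE mulrDr. Qed.

Lemma tensmxBr m n p q (A : 'M[R]_(m, n)) (B C : 'M[R]_(p, q)) :
  A *t (B - C) = A *t B - A *t C.
Proof. by apply/matrixP=> i j; rewrite !mxE mulrBr. Qed.

Lemma tensmx11 m n : (1%:M : 'M[R]_m) *t (1%:M : 'M[R]_n) = 1%:M.
Proof.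
apply/matrixP=> i j.
case: (mxtens_indexP i) => i1 i2; case: (mxtens_indexP j) => j1 j2.
by rewrite tensmxE !mxE -natrM mulnb (inj_eq (can_inj (@mxtens_indexK _ _))).
Qed.

End TensorAlgebra.

Lemma mulmx_parallelogram (R : comPzRingType) n (P Q X : 'M[R]_n) :
  (P - Q) *m X *m (P - Q) + (P + Q) *m X *m (P + Q) =
  (P *m X *m P + Q *m X *m Q) *+ 2.
Proof.
rewrite !(mulmxDl, mulmxDr, mulmxBl, mulmxBr, mulNmx, mulmxN).
move: (P *m X *m P) (P *m X *m Q) (Q *m X *m P) (Q *m X *m Q) => a b c d.
by apply/matrixP=> i j; rewrite !mxE; ring.
Qed.

Lemma sum_bool_half (F : numFieldType) (V : lmodType F) (v : V) :
  \sum_(d : bool) 2^-1 *: v = v.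
Proof.
by rewrite big_bool /= -scalerDr -mulr2n -scaler_nat scalerA mulVf ?scale1r ?pnatr_eq0.
Qed.

Lemma adjK m n (A : 'M[algC]_(m, n)) : adj (adj A) = A.
Proof. by apply/matrixP=> i j; rewrite !mxE conjCK. Qed.

Lemma adjM m n p (A : 'M[algC]_(m, n)) (B : 'M[algC]_(n, p)) :
  adj (A *m B) = adj B *m adj A.
Proof. by rewrite /adj map_mxM trmx_mul. Qed.

Lemma adj1 n : adj (1%:M : 'M[algC]_n) = 1%:M.
Proof. by rewrite /adj map_scalar_mx rmorph1 trmx1. Qed.

Lemma adjD m n (A B : 'M[algC]_(m, n)) : adj (A + B) = adj A + adj B.
Proof. by rewrite /adj map_mxD linearD. Qed.

Lemma adjB m n (A B : 'M[algC]_(m, n)) : adj (A - B) = adj A - adj B.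
Proof. by rewrite /adj map_mxB linearB. Qed.

Lemma adj_tens m n p q (A : 'M[algC]_(m, n)) (B : 'M[algC]_(p, q)) :
  adj (A *t B) = adj A *t adj B.
Proof. by rewrite /adj map_mxT trmx_tens. Qed.

Lemma conjM m n p (A : 'M[algC]_(m, n)) (B : 'M[algC]_(n, p)) rho :
  conj (A *m B) rho = conj A (conj B rho).
Proof. by rewrite /conj adjM !mulmxA. Qed.

Lemma conj1 n (rho : 'M[algC]_n) : conj 1%:M rho = rho.
Proof. by rewrite /conj adj1 mul1mx mulmx1. Qed.

Lemma conjD m n (C : 'M[algC]_(m, n)) rho sigma :
  conj C (rho + sigma) = conj C rho + conj C sigma.
Proof. by rewrite /conj mulmxDr mulmxDl. Qed.

Lemma conjZ m n (C : 'M[algC]_(m, n)) a rho : conj C (a *: rho) = a *: conj C rho.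
Proof. by rewrite /conj -scalemxAr -scalemxAl. Qed.

Lemma conj_outer m n (C : 'M[algC]_(m, n)) (v w : 'cV[algC]_n) :
  conj C (v *m adj w) = (C *m v) *m adj (C *m w).
Proof. by rewrite /conj adjM !mulmxA. Qed.

Section QubitAction.
Variable m : nat.

Lemma onq1 : onq (1%:M : 'M[algC]_2) = 1%:M :> 'M_(m * 2).
Proof. exact: tensmx11. Qed.

Lemma onqM a b c (A : 'M[algC]_(a, b)) (B : 'M[algC]_(b, c)) :
  onq (A *m B) = onq A *m onq B :> 'M_(m * a, m * c).
Proof. by rewrite /onq tensmx_mul mul1mx. Qed.

Lemma onqD a b (A B : 'M[algC]_(a, b)) :
  onq (A + B) = onq A + onq B :> 'M_(m * a, m * b).
Proof. exact: tensmxDr. Qed.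

Lemma onqB a b (A B : 'M[algC]_(a, b)) :
  onq (A - B) = onq A - onq B :> 'M_(m * a, m * b).
Proof. exact: tensmxBr. Qed.

Lemma adj_onq a b (A : 'M[algC]_(a, b)) :
  adj (onq A) = onq (adj A) :> 'M_(m * b, m * a).
Proof. by rewrite /onq adj_tens adj1. Qed.

End QubitAction.

Lemma conj_twirl n (P Q X : 'M[algC]_n) : adj P = P -> adj Q = Q ->
  2^-1 *: conj (P - Q) X + 2^-1 *: conj (P + Q) X = conj P X + conj Q X.
Proof.
move=> adjP adjQ; rewrite /conj adjB adjD adjP adjQ -scalerDr mulmx_parallelogram.
by rewrite -scaler_nat scalerA mulVf ?scale1r ?pnatr_eq0.
Qed.

Lemma proj_sum : proj false + proj true = 1%:M.
Proof.
apply/matrixP=> i j; rewrite !mxE !big_ord1 !mxE.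
by case: i => [[|[|//]] ?]; case: j => [[|[|//]] ?]; rewrite /= ?conjC1 ?conjC0; ring.
Qed.

Lemma PauliZ_proj : PauliZ = proj false - proj true.
Proof.
apply/matrixP=> i j; rewrite !mxE !big_ord1 !mxE.
by case: i => [[|[|//]] ?]; case: j => [[|[|//]] ?]; rewrite /= ?conjC1 ?conjC0; ring.
Qed.

Lemma adj_proj b : adj (proj b) = proj b.
Proof. by rewrite /proj adjM adjK. Qed.

Lemma Zpow_ket0 d : Zpow d *m ket false = ket false.
Proof.
case: d; rewrite /= ?mul1mx //.
apply/matrixP=> i j; rewrite !mxE big_ord_recl big_ord1 !mxE.
by case: i => [[|[|//]] ?]; rewrite /=; ring.
Qed.

Definition dephase m (rho : 'M[algC]_(m * 2)) : 'M[algC]_(m * 2) :=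
  \sum_(b : bool) conj (onq (proj b)) rho.

Lemma Zpow_twirl m (rho : 'M[algC]_(m * 2)) :
  \sum_(d : bool) 2^-1 *: conj (onq (Zpow d)) rho = dephase rho.
Proof.
rewrite /dephase !big_bool /= PauliZ_proj -proj_sum onqB onqD.
by rewrite conj_twirl ?adj_onq ?adj_proj // addrC.
Qed.

Lemma piS_RU_dephase m U (rho : 'M[algC]_(m * 2)) :
  piS_RU U rho = conj (onq U) (dephase rho).
Proof.
rewrite /piS_RU /RU -Zpow_twirl !big_bool /= conjD !conjZ.
by rewrite !onqM !conjM.
Qed.

Lemma conj_Zpow_proj0 d : conj (Zpow d) (proj false) = proj false.
Proof. by rewrite /proj conj_outer Zpow_ket0. Qed.

Lemma piS_piR_RU_ideal U : piS_piR_RU U = RSPSN U false.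
Proof.
rewrite /piS_piR_RU /RSPSN.
under eq_bigr do rewrite conjM conj_Zpow_proj0.
exact: sum_bool_half.
Qed.

Definition basis_measurement (b : bool) : seq 'M[algC]_(1, 2) := [:: adj (ket b)].
Definition identity_channel : seq 'M[algC]_(2, 1 * 2) := [:: 1%:M].

Lemma basis_measurement_complete :
  \sum_(b : bool) \sum_(k <- basis_measurement b) adj k *m k = 1%:M.
Proof. by rewrite big_bool /= !big_seq1 !adjK addrC -proj_sum. Qed.

Lemma identity_channel_complete : \sum_(l <- identity_channel) adj l *m l = 1%:M.
Proof. by rewrite big_seq1 adj1 mulmx1. Qed.

Definition basis_simulator : simulator :=
  Simulator basis_measurement_complete identity_channel_complete.

Lemma onq_col_mulmx m p (v : 'cV[algC]_2) (A : 'M[algC]_(m * 1, p)) i1 i2 l :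
  (onq v *m A) (mxtens_index (i1, i2)) l = v i2 0 * A (mxtens_index (i1, ord0)) l.
Proof.
rewrite mxE (bigD1 (mxtens_index (i1, ord0))) //= tensmxE mxE eqxx mul1r big1 ?addr0 //.
move=> k; case: (mxtens_indexP k) => k1 k0; rewrite [k0]ord1.
rewrite (inj_eq (can_inj (@mxtens_indexK _ _))) xpair_eqE eqxx andbT.
by rewrite tensmxE mxE eq_sym => /negbTE->; rewrite !mul0r.
Qed.

Lemma mulmx_onq_row m p (A : 'M[algC]_(p, m * 1)) (w : 'rV[algC]_2) k j1 j2 :
  (A *m onq w) k (mxtens_index (j1, j2)) = A k (mxtens_index (j1, ord0)) * w 0 j2.
Proof.
rewrite mxE (bigD1 (mxtens_index (j1, ord0))) //= tensmxE mxE eqxx mul1r big1 ?addr0 //.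
move=> l; case: (mxtens_indexP l) => l1 l0; rewrite [l0]ord1.
rewrite (inj_eq (can_inj (@mxtens_indexK _ _))) xpair_eqE eqxx andbT.
by rewrite tensmxE mxE => /negbTE->; rewrite mul0r mulr0.
Qed.

Lemma castmx_tens_outer m (A : 'M[algC]_(m * 1)) (v w : 'cV[algC]_2) :
  castmx (esym (mulnA m 1 2), esym (mulnA m 1 2)) (A *t (v *m adj w)) =
  onq v *m A *m onq (adj w).
Proof.
apply/matrixP=> i j.
case: (mxtens_indexP i) => i1 i2; case: (mxtens_indexP j) => j1 j2.
have cast_index (k1 : 'I_m) (k2 : 'I_2) :
    cast_ord (esym (esym (mulnA m 1 2))) (mxtens_index (k1, k2)) =
    mxtens_index (mxtens_index (k1, ord0) : 'I_(m * 1), k2).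
  by apply: val_inj; rewrite /= muln1 addn0.
rewrite castmxE !cast_index tensmxE mulmx_onq_row onq_col_mulmx mxE big_ord1 !mxE.
by rewrite mulrCA mulrA.
Qed.

Lemma onq_measure_prepare m (U : 'M[algC]_2) b (rho : 'M[algC]_(m * 2)) :
  onq (U *m ket b) *m conj (onq (adj (ket b))) rho *m onq (adj (U *m ket b)) =
  conj (onq U) (conj (onq (proj b)) rho).
Proof. by rewrite /conj /proj !adj_onq !adjM !adjK !onqM !mulmxA. Qed.

Lemma RSPSN_sigma_dephase m U (rho : 'M[algC]_(m * 2)) :
  RSPSN_sigma basis_simulator U rho = conj (onq U) (dephase rho).
Proof.
rewrite /RSPSN_sigma /dephase /=.
under eq_bigr do rewrite !big_seq1 [RSPSN _ _]conj_outer castmx_tens_outer.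
under eq_bigr do rewrite onq1 conj1 onq_measure_prepare.
by rewrite !big_bool /= conjD.
Qed.

Theorem theorem7 : P4_constructs 0%R.
Proof.
split=> [U E _ _ | ]; first by rewrite /eps_close piS_piR_RU_ideal subrr normr0.
exists basis_simulator => m U rho E _ _ _.
by rewrite /eps_close piS_RU_dephase RSPSN_sigma_dephase subrr normr0.
Qed.
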